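(* Let $\kappa>\gamma\ge0$, $\chi\in\mathbb{R}$, and let $(\psi_1,\psi_2)(x,z)$ be a smooth solution, with $\psi_j,\psi_{j,x}$ decaying sufficiently fast as $|x|\to\infty$ so that all integrals below are finite and boundary terms vanish, of $$i\psi_{1,z}=-\psi_{1,xx}-\kappa\psi_2+i\gamma\psi_1+\chi(|\psi_1|^2+|\psi_2|^2)\psi_1,$$ $$i\psi_{2,z}=-\psi_{2,xx}-\kappa\psi_1-i\gamma\psi_2+\chi(|\psi_1|^2+|\psi_2|^2)\psi_2.$$ Define $S_0=\int_{\mathbb{R}}(|\psi_1|^2+|\psi_2|^2)dx$, $S_1=\int_{\mathbb{R}}(\psi_1^*\psi_2+\psi_2^*\psi_1)dx$, $S_2=i\int_{\mathbb{R}}(\psi_1^*\psi_2-\psi_2^*\psi_1)dx$, $S_3=\int_{\mathbb{R}}(|\psi_1|^2-|\psi_2|^2)dx$. Then $\dot S_0=2\gamma S_3$, $\dot S_1=0$, $\dot S_2=-2\kappa S_3$, $\dot S_3=2\gamma S_0+2\kappa S_2$; the quantities $S_1$ and $C=\kappa S_0+\gamma S_2$ are conserved; and with $\omega=\sqrt{\kappa^2-\gamma^2}$ there are constants $A_1,A_2$ such that $S_0(z)=\kappa C/\omega^2+A_1\cos(2\omega z)+A_2\sin(2\omega z)$. In particular $S_0$ is bounded in $z$.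
   Context: Overdot denotes $d/dz$. *)

From Stdlib Require Import Reals.
Open Scope R_scope.

Record cplx : Type := mkC { Re : R ; Im : R }.

Definition RtoC (r : R) : cplx := mkC r 0.
Definition Ci : cplx := mkC 0 1.
Definition Cadd (a b : cplx) : cplx := mkC (Re a + Re b) (Im a + Im b).
Definition Copp (a : cplx) : cplx := mkC (- Re a) (- Im a).
Definition Csub (a b : cplx) : cplx := Cadd a (Copp b).
Definition Cmul (a b : cplx) : cplx :=
  mkC (Re a * Re b - Im a * Im b) (Re a * Im b + Im a * Re b).
Definition Cscal (r : R) (a : cplx) : cplx := Cmul (RtoC r) a.
Definition Cconj (a : cplx) : cplx := mkC (Re a) (- Im a).
Definition Cabs (a : cplx) : R := sqrt (Re a ^ 2 + Im a ^ 2).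

Definition pderiv_x (f f' : R -> R -> cplx) : Prop :=
  forall x z,
    derivable_pt_lim (fun t => Re (f t z)) x (Re (f' x z)) /\
    derivable_pt_lim (fun t => Im (f t z)) x (Im (f' x z)).

Definition pderiv_z (f f' : R -> R -> cplx) : Prop :=
  forall x z,
    derivable_pt_lim (fun t => Re (f x t)) z (Re (f' x z)) /\
    derivable_pt_lim (fun t => Im (f x t)) z (Im (f' x z)).

Definition jcont (f : R -> R -> cplx) : Prop :=
  forall x z eps, 0 < eps -> exists d, 0 < d /\
    forall x' z', Rabs (x' - x) < d -> Rabs (z' - z) < d ->
      Cabs (Csub (f x' z') (f x z)) < eps.

Definition improper_integral (f : R -> R) (l : R) : Prop :=
  (forall a b, inhabited (Riemann_integrable f a b)) /\
  forall eps, 0 < eps -> exists M, 0 <= M /\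
    forall a b (pr : Riemann_integrable f a b),
      a <= - M -> M <= b -> Rabs (RiemannInt pr - l) < eps.

Definition cintegral (f : R -> cplx) (L : cplx) : Prop :=
  improper_integral (fun x => Re (f x)) (Re L) /\
  improper_integral (fun x => Im (f x)) (Im L).

Definition vanishes_at_infty (f : R -> cplx) : Prop :=
  forall eps, 0 < eps -> exists M, forall x, M < Rabs x -> Cabs (f x) < eps.

From Coquelicot Require Import Coquelicot.
From Stdlib Require Import Reals Lra.
Open Scope R_scope.

(* Each Stokes density rho obeys a balance law [d_z rho = sigma + d_x J]: the source sigma is a
   linear combination of Stokes densities and the flux J, built from psi_j and psi_{j,x}, vanishes
   at infinity, while the nonlinear term drops out because it acts as a real potential.
   Integrating in x (the z-derivative passes under the integral by the domination hypothesis)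
   gives the linear system for S_0, ..., S_3.  Then kappa S_0 + gamma S_2 = C is conserved and
   S_0'' = -4 omega^2 S_0 + 4 kappa C, a harmonic oscillator whose energy identity pins down
   S_0 from S_0(0) and S_0'(0). *)

Lemma is_derive_Rconst (c x : R) : is_derive (fun _ => c) x 0.
Proof. exact (is_derive_const c x). Qed.

Lemma is_derive_Rplus (f g : R -> R) (x df dg : R) :
  is_derive f x df -> is_derive g x dg -> is_derive (fun t => f t + g t) x (df + dg).
Proof. intros; apply (is_derive_plus f g); auto. Qed.

Lemma is_derive_Rminus (f g : R -> R) (x df dg : R) :
  is_derive f x df -> is_derive g x dg -> is_derive (fun t => f t - g t) x (df - dg).
Proof. intros; apply (is_derive_minus f g); auto. Qed.

Lemma is_derive_Rmult (f g : R -> R) (x df dg : R) :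
  is_derive f x df -> is_derive g x dg ->
  is_derive (fun t => f t * g t) x (df * g x + f x * dg).
Proof. intros; apply (is_derive_mult f g); auto; intros; apply Rmult_comm. Qed.

Lemma is_derive_Rscal (k : R) (f : R -> R) (x df : R) :
  is_derive f x df -> is_derive (fun t => k * f t) x (k * df).
Proof. intros; apply is_derive_scal; auto. Qed.

Lemma is_derive_Rsqr (f : R -> R) (x df : R) :
  is_derive f x df -> is_derive (fun t => f t ^ 2) x (2 * df * f x).
Proof.
  intros Hf; apply (is_derive_ext (fun t => f t * f t)); [intros t; simpl; ring |].
  replace (2 * df * f x) with (df * f x + f x * df) by ring.
  apply is_derive_Rmult; auto.
Qed.

Lemma is_derive_val (f : R -> R) (x l l' : R) : is_derive f x l -> l = l' -> is_derive f x l'.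
Proof. intros Hf <-; exact Hf. Qed.

Lemma continuity_2d_pt_continuous_snd (f : R -> R -> R) (z x : R) :
  continuity_2d_pt f z x -> continuous (f z) x.
Proof.
  intros Hf; apply continuity_pt_filterlim; intros eps Heps.
  destruct (Hf (mkposreal eps Heps)) as [d Hd].
  exists d; split; [apply cond_pos |]; intros y [_ Hy]; simpl in *.
  apply (Hd z y); [rewrite Rminus_diag, Rabs_R0; apply cond_pos | exact Hy].
Qed.

(** * Improper integrals over the real line *)

Definition is_RInt_improper (f : R -> R) (l : R) : Prop :=
  (forall a b, ex_RInt f a b) /\
  forall eps, 0 < eps -> exists M, 0 <= M /\
    forall a b, a <= - M -> M <= b -> Rabs (RInt f a b - l) < eps.

Lemma improper_integral_RInt (f : R -> R) (l : R) :
  improper_integral f l -> is_RInt_improper f l.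
Proof.
  intros [Hex Hlim]; split.
  - intros a b; destruct (Hex a b) as [pr]; exact (ex_RInt_Reals_1 f a b pr).
  - intros eps Heps; destruct (Hlim eps Heps) as [M [HM HMab]].
    exists M; split; [exact HM |]; intros a b Ha Hb.
    destruct (Hex a b) as [pr]; rewrite (RInt_Reals f a b pr); auto.
Qed.

Lemma is_RInt_improper_ext (f g : R -> R) (l : R) :
  (forall x, f x = g x) -> is_RInt_improper f l -> is_RInt_improper g l.
Proof.
  intros Efg [Hex Hlim]; split.
  - intros a b; apply (ex_RInt_ext f); auto.
  - intros eps Heps; destruct (Hlim eps Heps) as [M [HM HMab]].
    exists M; split; [exact HM |]; intros a b Ha Hb.
    rewrite <- (RInt_ext f g); auto.
Qed.

Lemma is_RInt_improper_plus (f g : R -> R) (lf lg : R) :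
  is_RInt_improper f lf -> is_RInt_improper g lg ->
  is_RInt_improper (fun x => f x + g x) (lf + lg).
Proof.
  intros [Fex Flim] [Gex Glim]; split.
  - intros a b; apply (ex_RInt_plus f g); auto.
  - intros eps Heps.
    destruct (Flim (eps / 2)) as [Mf [HMf Hf]]; [lra |].
    destruct (Glim (eps / 2)) as [Mg [HMg Hg]]; [lra |].
    exists (Rmax Mf Mg); split; [apply (Rle_trans _ Mf); [exact HMf | apply Rmax_l] |].
    intros a b Ha Hb.
    pose proof (Rmax_l Mf Mg); pose proof (Rmax_r Mf Mg).
    replace (RInt (fun x => f x + g x) a b) with (RInt f a b + RInt g a b)
      by (symmetry; apply (RInt_plus f g); auto).
    specialize (Hf a b ltac:(lra) ltac:(lra)); specialize (Hg a b ltac:(lra) ltac:(lra)).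
    apply Rabs_def2 in Hf; apply Rabs_def2 in Hg; apply Rabs_def1; lra.
Qed.

Lemma is_RInt_improper_scal (k : R) (f : R -> R) (l : R) :
  is_RInt_improper f l -> is_RInt_improper (fun x => k * f x) (k * l).
Proof.
  intros [Fex Flim]; split.
  - intros a b; apply (ex_RInt_scal f); auto.
  - intros eps Heps.
    assert (Hk : 0 < Rabs k + 1) by (pose proof (Rabs_pos k); lra).
    destruct (Flim (eps / (Rabs k + 1))) as [M [HM Hf]]; [apply Rdiv_lt_0_compat; auto |].
    exists M; split; [exact HM |]; intros a b Ha Hb.
    replace (RInt (fun x => k * f x) a b) with (k * RInt f a b)
      by (symmetry; apply (RInt_scal f); auto).
    replace (k * RInt f a b - k * l) with (k * (RInt f a b - l)) by ring.
    rewrite Rabs_mult.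
    specialize (Hf a b Ha Hb).
    apply (Rle_lt_trans _ ((Rabs k + 1) * Rabs (RInt f a b - l))).
    + apply Rmult_le_compat_r; [apply Rabs_pos | lra].
    + apply (Rmult_lt_compat_l (Rabs k + 1)) in Hf; auto.
      replace ((Rabs k + 1) * (eps / (Rabs k + 1))) with eps in Hf by (field; lra); exact Hf.
Qed.

Lemma is_RInt_improper_0 : is_RInt_improper (fun _ => 0) 0.
Proof.
  split; [intros a b; apply ex_RInt_const |].
  intros eps Heps; exists 0; split; [lra |]; intros a b _ _.
  rewrite RInt_const; unfold scal; simpl; unfold mult; simpl.
  rewrite Rmult_0_r, Rminus_0_r, Rabs_R0; exact Heps.
Qed.

Lemma is_RInt_improper_tail (g : R -> R) (G : R) :
  is_RInt_improper g G -> forall eps, 0 < eps -> exists M0, 0 <= M0 /\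
  forall M a b, M0 <= M -> a <= - M -> M <= b -> RInt g a (- M) + RInt g M b < eps.
Proof.
  intros [Gex Glim] eps Heps.
  destruct (Glim (eps / 2)) as [M0 [HM0 Hg]]; [lra |].
  exists M0; split; [exact HM0 |]; intros M a b HM Ha Hb.
  assert (Split : RInt g a b = RInt g a (- M) + RInt g (- M) M + RInt g M b).
  { rewrite <- (RInt_Chasles g a M b), <- (RInt_Chasles g a (- M) M); auto. }
  pose proof (Hg a b ltac:(lra) ltac:(lra)) as Hab.
  pose proof (Hg (- M) M ltac:(lra) ltac:(lra)) as HM'.
  rewrite Split in Hab; apply Rabs_def2 in Hab; apply Rabs_def2 in HM'; lra.
Qed.

(** * Differentiation under the improper integral *)

Lemma Rabs_RInt_le_RInt (f g : R -> R) (a b : R) :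
  a <= b -> ex_RInt f a b -> ex_RInt g a b ->
  (forall x, Rabs (f x) <= g x) -> Rabs (RInt f a b) <= RInt g a b.
Proof.
  intros Hab Hf Hg Hfg; apply Rabs_le; split.
  - replace (- RInt g a b) with (RInt (fun x => - g x) a b)
      by (apply (RInt_opp g); auto).
    apply RInt_le; auto; [apply (ex_RInt_opp g); auto |].
    intros x _; pose proof (Hfg x) as Hx; apply Rabs_le_between in Hx; lra.
  - apply RInt_le; auto.
    intros x _; pose proof (Hfg x) as Hx; apply Rabs_le_between in Hx; lra.
Qed.

Lemma Rabs_increment_le (F dF : R -> R) (z0 h K : R) :
  (forall z, is_derive F z (dF z)) ->
  (forall z, Rabs (z - z0) <= Rabs h -> Rabs (dF z) <= K) ->
  Rabs (F (z0 + h) - F z0) <= K * Rabs h.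
Proof.
  intros HF HdF.
  destruct (MVT_abs F dF z0 (z0 + h)) as [c [Hc Hcz]];
    [intros c _; apply is_derive_Reals, HF |].
  rewrite Hc; replace (z0 + h - z0) with h by ring.
  apply Rmult_le_compat_r; [apply Rabs_pos | apply HdF].
  unfold Rmin, Rmax in Hcz; destruct (Rle_dec z0 (z0 + h));
    unfold Rabs; repeat destruct Rcase_abs; lra.
Qed.

Lemma RInt_param_increment_le (F Fz : R -> R -> R) (g : R -> R) (z0 h a b : R) :
  a <= b ->
  (forall z x, is_derive (fun t => F t x) z (Fz z x)) ->
  (forall z, ex_RInt (F z) a b) -> ex_RInt g a b ->
  (forall x z, Rabs (z - z0) <= Rabs h -> Rabs (Fz z x) <= g x) ->
  Rabs (RInt (F (z0 + h)) a b - RInt (F z0) a b) <= Rabs h * RInt g a b.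
Proof.
  intros Hab HF Fex Hg Hdom.
  replace (RInt (F (z0 + h)) a b - RInt (F z0) a b)
    with (RInt (fun x => F (z0 + h) x - F z0 x) a b)
    by (apply (RInt_minus (F (z0 + h)) (F z0)); auto).
  replace (Rabs h * RInt g a b) with (RInt (fun x => Rabs h * g x) a b)
    by (apply (RInt_scal g); auto).
  apply Rabs_RInt_le_RInt; auto.
  - apply (ex_RInt_minus (F (z0 + h)) (F z0)); auto.
  - apply (ex_RInt_scal g); auto.
  - intros x; rewrite Rmult_comm.
    apply (Rabs_increment_le (fun t => F t x) (fun t => Fz t x)); auto.
Qed.

(* Outside [[-M, M]] the increment in [z] is controlled by the tails of the dominating function. *)
Lemma improper_RInt_param_increment (F Fz : R -> R -> R) (I g : R -> R) (G z0 h M tail : R) :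
  (forall z x, is_derive (fun t => F t x) z (Fz z x)) ->
  (forall z, is_RInt_improper (F z) (I z)) ->
  is_RInt_improper g G ->
  (forall x z, Rabs (z - z0) <= Rabs h -> Rabs (Fz z x) <= g x) ->
  0 <= M ->
  (forall a b, a <= - M -> M <= b -> RInt g a (- M) + RInt g M b <= tail) ->
  Rabs ((I (z0 + h) - I z0) - (RInt (F (z0 + h)) (- M) M - RInt (F z0) (- M) M))
    <= Rabs h * tail.
Proof.
  intros HF HI [Gex _] Hdom HM Htail.
  apply Rle_plus_epsilon; intros eta Heta.
  destruct (proj2 (HI (z0 + h)) (eta / 2)) as [M1 [_ H1]]; [lra |].
  destruct (proj2 (HI z0) (eta / 2)) as [M2 [_ H2]]; [lra |].
  set (A := Rmax M (Rmax M1 M2)).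
  assert (HA : M <= A /\ M1 <= A /\ M2 <= A).
  { unfold A; pose proof (Rmax_l M (Rmax M1 M2)); pose proof (Rmax_r M (Rmax M1 M2));
    pose proof (Rmax_l M1 M2); pose proof (Rmax_r M1 M2); lra. }
  specialize (H1 (- A) A ltac:(lra) ltac:(lra)).
  specialize (H2 (- A) A ltac:(lra) ltac:(lra)).
  assert (Split : forall z, RInt (F z) (- A) A =
     RInt (F z) (- A) (- M) + RInt (F z) (- M) M + RInt (F z) M A).
  { intros z; rewrite <- (RInt_Chasles (F z) (- A) M A), <- (RInt_Chasles (F z) (- A) (- M) M);
      auto; apply HI. }
  rewrite Split in H1, H2.
  pose proof (RInt_param_increment_le F Fz g z0 h (- A) (- M) ltac:(lra) HF
    (fun z => proj1 (HI z) _ _) (Gex _ _) Hdom) as Left.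
  pose proof (RInt_param_increment_le F Fz g z0 h M A ltac:(lra) HF
    (fun z => proj1 (HI z) _ _) (Gex _ _) Hdom) as Right.
  pose proof (Htail (- A) A ltac:(lra) ltac:(lra)) as Tail.
  apply (Rmult_le_compat_l (Rabs h)) in Tail; [| apply Rabs_pos].
  apply Rabs_def2 in H1; apply Rabs_def2 in H2.
  apply Rabs_le_between in Left; apply Rabs_le_between in Right.
  apply Rabs_le; split; nra.
Qed.

Lemma derivable_pt_lim_improper_RInt_param (F Fz : R -> R -> R) (I : R -> R) (z0 L : R) :
  (forall z x, is_derive (fun t => F t x) z (Fz z x)) ->
  (forall z x, continuity_2d_pt Fz z x) ->
  (forall z, is_RInt_improper (F z) (I z)) ->
  (exists d g G, 0 < d /\ is_RInt_improper g G /\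
     forall x z, Rabs (z - z0) < d -> Rabs (Fz z x) <= g x) ->
  (forall eps, 0 < eps -> exists M, forall M', M <= M' ->
     Rabs (RInt (Fz z0) (- M') M' - L) < eps) ->
  derivable_pt_lim I z0 L.
Proof.
  intros HF HFz HI [d [g [G [Hd [Hg Hdom]]]]] HL eps Heps.
  destruct (is_RInt_improper_tail g G Hg (eps / 3)) as [Mg [HMg Htail]]; [lra |].
  destruct (HL (eps / 3)) as [ML HML]; [lra |].
  set (M := Rmax Mg ML).
  assert (HM : Mg <= M /\ ML <= M) by (split; [apply Rmax_l | apply Rmax_r]).
  set (P z := RInt (F z) (- M) M).
  set (P' := RInt (Fz z0) (- M) M).
  assert (HP : is_derive P z0 P').
  { replace P' with (RInt (fun x => Derive (fun u => F u x) z0) (- M) M).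
    - apply is_derive_RInt_param.
      + apply filter_forall; intros z x _; eexists; apply HF.
      + intros x _; apply (continuity_2d_pt_ext Fz); [| apply HFz].
        intros u v; symmetry; apply is_derive_unique, HF.
      + apply filter_forall; intros z; apply HI.
    - apply RInt_ext; intros x _; apply is_derive_unique, HF. }
  apply is_derive_Reals in HP; destruct (HP (eps / 3)) as [d1 Hd1]; [lra |].
  assert (Hdelta : 0 < Rmin d1 d) by (apply Rmin_pos; [apply cond_pos | exact Hd]).
  exists (mkposreal _ Hdelta); intros h Hh0 Hh; simpl in Hh.
  assert (Hhd1 : Rabs h < d1) by (eapply Rlt_le_trans; [exact Hh | apply Rmin_l]).
  assert (Hhd : Rabs h < d) by (eapply Rlt_le_trans; [exact Hh | apply Rmin_r]).
  assert (Hh' : 0 < Rabs h) by (apply Rabs_pos_lt; exact Hh0).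
  assert (Inc : Rabs ((I (z0 + h) - I z0) - (P (z0 + h) - P z0)) <= Rabs h * (eps / 3)).
  { apply (improper_RInt_param_increment F Fz I g G z0 h M (eps / 3) HF HI Hg).
    - intros x z Hz; apply Hdom; lra.
    - pose proof (Rmax_l Mg ML); lra.
    - intros a b Ha Hb; apply Rlt_le, Htail; lra. }
  assert (Inc' : Rabs (((I (z0 + h) - I z0) - (P (z0 + h) - P z0)) / h) <= eps / 3).
  { unfold Rdiv; rewrite Rabs_mult, Rabs_inv.
    apply (Rmult_le_reg_r (Rabs h)); auto.
    rewrite Rmult_assoc, Rinv_l by lra; lra. }
  specialize (Hd1 h Hh0 Hhd1); specialize (HML M (proj2 HM)).
  replace ((I (z0 + h) - I z0) / h - L) with
    (((P (z0 + h) - P z0) / h - P') + ((I (z0 + h) - I z0) - (P (z0 + h) - P z0)) / h + (P' - L))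
    by (field; exact Hh0).
  apply Rabs_def2 in Hd1; apply Rabs_def2 in HML; apply Rabs_le_between in Inc'.
  apply Rabs_def1; unfold P, P' in *; lra.
Qed.

(** * Balance laws *)

Definition Rvanishes_at_infty (u : R -> R) : Prop :=
  forall eps, 0 < eps -> exists M, forall x, M < Rabs x -> Rabs (u x) < eps.

Lemma Rvanishes_at_infty_plus (u v : R -> R) :
  Rvanishes_at_infty u -> Rvanishes_at_infty v -> Rvanishes_at_infty (fun x => u x + v x).
Proof.
  intros Hu Hv eps Heps.
  destruct (Hu (eps / 2)) as [Mu Hu']; [lra |].
  destruct (Hv (eps / 2)) as [Mv Hv']; [lra |].
  exists (Rmax Mu Mv); intros x Hx.
  pose proof (Rmax_l Mu Mv); pose proof (Rmax_r Mu Mv).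
  pose proof (Hu' x ltac:(lra)); pose proof (Hv' x ltac:(lra)).
  pose proof (Rabs_triang (u x) (v x)); lra.
Qed.

Lemma Rvanishes_at_infty_scal (k : R) (u : R -> R) :
  Rvanishes_at_infty u -> Rvanishes_at_infty (fun x => k * u x).
Proof.
  intros Hu eps Heps.
  assert (Hk : 0 < Rabs k + 1) by (pose proof (Rabs_pos k); lra).
  destruct (Hu (eps / (Rabs k + 1))) as [M HM]; [apply Rdiv_lt_0_compat; auto |].
  exists M; intros x Hx; rewrite Rabs_mult.
  specialize (HM x Hx); pose proof (Rabs_pos k); pose proof (Rabs_pos (u x)).
  assert (eps / (Rabs k + 1) * (Rabs k + 1) = eps) by (field; lra).
  nra.
Qed.

Lemma Rvanishes_at_infty_minus (u v : R -> R) :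
  Rvanishes_at_infty u -> Rvanishes_at_infty v -> Rvanishes_at_infty (fun x => u x - v x).
Proof.
  intros Hu Hv; apply (Rvanishes_at_infty_plus u (fun x => - v x)); [exact Hu |].
  intros eps Heps; destruct (Hv eps Heps) as [M HM].
  exists M; intros x Hx; rewrite Rabs_Ropp; auto.
Qed.

Lemma Rvanishes_at_infty_mult (u v : R -> R) :
  Rvanishes_at_infty u -> Rvanishes_at_infty v -> Rvanishes_at_infty (fun x => u x * v x).
Proof.
  intros Hu Hv eps Heps.
  destruct (Hu eps Heps) as [Mu Hu']; destruct (Hv 1 Rlt_0_1) as [Mv Hv'].
  exists (Rmax Mu Mv); intros x Hx; rewrite Rabs_mult.
  pose proof (Rmax_l Mu Mv); pose proof (Rmax_r Mu Mv).
  pose proof (Hu' x ltac:(lra)); pose proof (Hv' x ltac:(lra)).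
  pose proof (Rabs_pos (u x)); pose proof (Rabs_pos (v x)); nra.
Qed.

Lemma symmetric_RInt_balance (rho src flux flux' : R -> R) (S : R) :
  (forall x, rho x = src x + flux' x) ->
  (forall x, is_derive flux x (flux' x)) -> (forall x, continuous flux' x) ->
  is_RInt_improper src S -> Rvanishes_at_infty flux ->
  forall eps, 0 < eps -> exists M, forall M', M <= M' ->
    Rabs (RInt rho (- M') M' - S) < eps.
Proof.
  intros Hrho Hflux Hflux' [Sex Slim] Hvan eps Heps.
  destruct (Slim (eps / 2)) as [Ms [_ HMs]]; [lra |].
  destruct (Hvan (eps / 4)) as [Mv HMv]; [lra |].
  exists (Rmax Ms (Rabs Mv + 1)); intros M HM.
  pose proof (Rmax_l Ms (Rabs Mv + 1)); pose proof (Rmax_r Ms (Rabs Mv + 1)).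
  pose proof (Rle_abs Mv); pose proof (Rabs_pos Mv).
  assert (Eflux : RInt flux' (- M) M = flux M - flux (- M)).
  { apply is_RInt_unique, (is_RInt_derive flux flux'); auto. }
  rewrite (RInt_ext rho (fun x => src x + flux' x)) by auto.
  replace (RInt (fun x => src x + flux' x) (- M) M) with (RInt src (- M) M + RInt flux' (- M) M)
    by (symmetry; apply (RInt_plus src flux'); auto;
        apply (ex_RInt_continuous (V := R_CompleteNormedModule)); auto).
  rewrite Eflux.
  specialize (HMs (- M) M ltac:(lra) ltac:(lra)).
  assert (Hright : Rabs (flux M) < eps / 4) by (apply HMv; rewrite Rabs_right; lra).
  assert (Hleft : Rabs (flux (- M)) < eps / 4) by (apply HMv; rewrite Rabs_left; lra).
  apply Rabs_def2 in HMs; apply Rabs_def2 in Hright; apply Rabs_def2 in Hleft.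
  apply Rabs_def1; lra.
Qed.

Lemma derivable_pt_lim_balance_law (rho rho_z sigma J J_x : R -> R -> R) (I Sigma : R -> R) :
  (forall z x, is_derive (fun t => rho t x) z (rho_z z x)) ->
  (forall z x, continuity_2d_pt rho_z z x) ->
  (forall z, is_RInt_improper (rho z) (I z)) ->
  (forall z0, exists d g G, 0 < d /\ is_RInt_improper g G /\
     forall x z, Rabs (z - z0) < d -> Rabs (rho_z z x) <= g x) ->
  (forall z x, rho_z z x = sigma z x + J_x z x) ->
  (forall z x, is_derive (J z) x (J_x z x)) ->
  (forall z x, continuity_2d_pt J_x z x) ->
  (forall z, is_RInt_improper (sigma z) (Sigma z)) ->
  (forall z, Rvanishes_at_infty (J z)) ->
  forall z, derivable_pt_lim I z (Sigma z).
Proof.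
  intros Hrho Hrho_z HI Hdom Hbal HJ HJ_x Hsigma Hvan z.
  apply (derivable_pt_lim_improper_RInt_param rho rho_z I z (Sigma z)); auto.
  apply (symmetric_RInt_balance (rho_z z) (sigma z) (J z) (J_x z)); auto.
  intros x; apply continuity_2d_pt_continuous_snd, HJ_x.
Qed.

(** * The Stokes moments of the coupled system *)

(* [cdot u v] and [ccross u v] are the real and imaginary parts of [u^* v]. *)
Definition cdot (u v : cplx) : R := Re u * Re v + Im u * Im v.
Definition ccross (u v : cplx) : R := Re u * Im v - Im u * Re v.

Lemma Cabs_sqr (a : cplx) : Cabs a ^ 2 = cdot a a.
Proof.
  unfold Cabs, cdot; rewrite pow2_sqrt; [ring |].
  pose proof (pow2_ge_0 (Re a)); pose proof (pow2_ge_0 (Im a)); lra.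
Qed.

Lemma Cabs_mul_sqr (a b : cplx) : (Cabs a * Cabs b) ^ 2 = cdot a b ^ 2 + ccross a b ^ 2.
Proof. rewrite Rpow_mult_distr, !Cabs_sqr; unfold cdot, ccross; ring. Qed.

Lemma Rabs_le_sqr (x y : R) : 0 <= y -> x ^ 2 <= y ^ 2 -> Rabs x <= y.
Proof.
  intros Hy Hxy; rewrite <- (Rabs_pos_eq y Hy).
  apply Rsqr_le_abs_0; unfold Rsqr; simpl in Hxy; lra.
Qed.

Lemma Rabs_cdot_le (a b : cplx) : Rabs (cdot a b) <= Cabs a * Cabs b.
Proof.
  apply Rabs_le_sqr; [apply Rmult_le_pos; apply sqrt_pos |].
  rewrite Cabs_mul_sqr; pose proof (pow2_ge_0 (ccross a b)); lra.
Qed.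

Lemma Rabs_ccross_le (a b : cplx) : Rabs (ccross a b) <= Cabs a * Cabs b.
Proof.
  apply Rabs_le_sqr; [apply Rmult_le_pos; apply sqrt_pos |].
  rewrite Cabs_mul_sqr; pose proof (pow2_ge_0 (cdot a b)); lra.
Qed.

Lemma pderiv_x_Re (f f' : R -> R -> cplx) (x z : R) :
  pderiv_x f f' -> is_derive (fun t => Re (f t z)) x (Re (f' x z)).
Proof. intros Hf; apply is_derive_Reals, Hf. Qed.

Lemma pderiv_x_Im (f f' : R -> R -> cplx) (x z : R) :
  pderiv_x f f' -> is_derive (fun t => Im (f t z)) x (Im (f' x z)).
Proof. intros Hf; apply is_derive_Reals, Hf. Qed.

Lemma pderiv_z_Re (f f' : R -> R -> cplx) (x z : R) :
  pderiv_z f f' -> is_derive (fun t => Re (f x t)) z (Re (f' x z)).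
Proof. intros Hf; apply is_derive_Reals, Hf. Qed.

Lemma pderiv_z_Im (f f' : R -> R -> cplx) (x z : R) :
  pderiv_z f f' -> is_derive (fun t => Im (f x t)) z (Im (f' x z)).
Proof. intros Hf; apply is_derive_Reals, Hf. Qed.

Lemma Rabs_Re_le_Cabs (a : cplx) : Rabs (Re a) <= Cabs a.
Proof.
  apply Rabs_le_sqr; [apply sqrt_pos |].
  rewrite Cabs_sqr; unfold cdot; pose proof (pow2_ge_0 (Im a)); lra.
Qed.

Lemma Rabs_Im_le_Cabs (a : cplx) : Rabs (Im a) <= Cabs a.
Proof.
  apply Rabs_le_sqr; [apply sqrt_pos |].
  rewrite Cabs_sqr; unfold cdot; pose proof (pow2_ge_0 (Re a)); lra.
Qed.

Lemma jcont_Re (f : R -> R -> cplx) (z x : R) :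
  jcont f -> continuity_2d_pt (fun z x => Re (f x z)) z x.
Proof.
  intros Hf eps; destruct (Hf x z eps (cond_pos eps)) as [d [Hd Hfd]].
  exists (mkposreal d Hd); intros u v Hu Hv; simpl in *.
  eapply Rle_lt_trans; [| exact (Hfd v u Hv Hu)].
  apply (Rabs_Re_le_Cabs (Csub (f v u) (f x z))).
Qed.

Lemma jcont_Im (f : R -> R -> cplx) (z x : R) :
  jcont f -> continuity_2d_pt (fun z x => Im (f x z)) z x.
Proof.
  intros Hf eps; destruct (Hf x z eps (cond_pos eps)) as [d [Hd Hfd]].
  exists (mkposreal d Hd); intros u v Hu Hv; simpl in *.
  eapply Rle_lt_trans; [| exact (Hfd v u Hv Hu)].
  apply (Rabs_Im_le_Cabs (Csub (f v u) (f x z))).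
Qed.

Lemma vanishes_at_infty_Re (f : R -> cplx) :
  vanishes_at_infty f -> Rvanishes_at_infty (fun x => Re (f x)).
Proof.
  intros Hf eps Heps; destruct (Hf eps Heps) as [M HM]; exists M; intros x Hx.
  eapply Rle_lt_trans; [apply Rabs_Re_le_Cabs | auto].
Qed.

Lemma vanishes_at_infty_Im (f : R -> cplx) :
  vanishes_at_infty f -> Rvanishes_at_infty (fun x => Im (f x)).
Proof.
  intros Hf eps Heps; destruct (Hf eps Heps) as [M HM]; exists M; intros x Hx.
  eapply Rle_lt_trans; [apply Rabs_Im_le_Cabs | auto].
Qed.

Lemma Rabs_double_plus_le (X Y g : R) :
  Rabs X <= g -> Rabs Y <= g -> Rabs (2 * (X + Y)) <= 4 * g.
Proof.
  intros HX HY; rewrite Rabs_mult, (Rabs_pos_eq 2) by lra.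
  pose proof (Rabs_triang X Y); lra.
Qed.

Lemma Rabs_double_minus_le (X Y g : R) :
  Rabs X <= g -> Rabs Y <= g -> Rabs (2 * (X - Y)) <= 4 * g.
Proof.
  intros HX HY; apply Rabs_double_plus_le; [exact HX | rewrite Rabs_Ropp; exact HY].
Qed.

(* A pattern variable such as [?k] below may capture the bound variable; passing it explicitly
   to [apply] then fails at once instead of starting a costly unification. *)
Ltac derive_poly :=
  repeat match goal with
  | |- is_derive (fun t => _ + _) _ _ => apply is_derive_Rplus
  | |- is_derive (fun t => _ - _) _ _ => apply is_derive_Rminus
  | |- is_derive (fun t => _ ^ 2) _ _ => apply is_derive_Rsqr
  | |- is_derive (fun t => ?k * _) _ _ => apply (is_derive_Rscal k)
  | |- is_derive (fun t => _ * _) _ _ => apply is_derive_Rmult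
  | H : pderiv_x ?f ?f' |- is_derive (fun t => Re (?f t _)) _ _ => apply (pderiv_x_Re f f' _ _ H)
  | H : pderiv_x ?f ?f' |- is_derive (fun t => Im (?f t _)) _ _ => apply (pderiv_x_Im f f' _ _ H)
  | H : pderiv_z ?f ?f' |- is_derive (fun t => Re (?f _ t)) _ _ => apply (pderiv_z_Re f f' _ _ H)
  | H : pderiv_z ?f ?f' |- is_derive (fun t => Im (?f _ t)) _ _ => apply (pderiv_z_Im f f' _ _ H)
  end.

Ltac continuity_poly :=
  repeat match goal with
  | |- continuity_2d_pt (fun u v => _ + _) _ _ => apply continuity_2d_pt_plus
  | |- continuity_2d_pt (fun u v => _ - _) _ _ => apply continuity_2d_pt_minus
  | |- continuity_2d_pt (fun u v => ?c) _ _ => apply continuity_2d_pt_const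
  | |- continuity_2d_pt (fun u v => _ * _) _ _ => apply continuity_2d_pt_mult
  | |- continuity_2d_pt (fun u v => Re (?f v u)) _ _ => apply jcont_Re; assumption
  | |- continuity_2d_pt (fun u v => Im (?f v u)) _ _ => apply jcont_Im; assumption
  end.

Ltac vanishes_poly :=
  repeat match goal with
  | |- Rvanishes_at_infty (fun x => _ + _) => apply Rvanishes_at_infty_plus
  | |- Rvanishes_at_infty (fun x => _ - _) => apply Rvanishes_at_infty_minus
  | |- Rvanishes_at_infty (fun x => ?k * _) => apply (Rvanishes_at_infty_scal k)
  | |- Rvanishes_at_infty (fun x => _ * _) => apply Rvanishes_at_infty_mult
  | |- Rvanishes_at_infty (fun x => Re _) => apply vanishes_at_infty_Re; solve [auto]
  | |- Rvanishes_at_infty (fun x => Im _) => apply vanishes_at_infty_Im; solve [auto]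
  end.

Section Stokes_moments.

Variables (kappa gamma chi : R).
Variables (psi1 psi2 psi1x psi2x psi1xx psi2xx psi1z psi2z : R -> R -> cplx).
Hypotheses (Hd1x : pderiv_x psi1 psi1x) (Hd2x : pderiv_x psi2 psi2x)
  (Hd1xx : pderiv_x psi1x psi1xx) (Hd2xx : pderiv_x psi2x psi2xx)
  (Hd1z : pderiv_z psi1 psi1z) (Hd2z : pderiv_z psi2 psi2z).
Hypotheses (Hc1 : jcont psi1) (Hc2 : jcont psi2)
  (Hc1xx : jcont psi1xx) (Hc2xx : jcont psi2xx) (Hc1z : jcont psi1z) (Hc2z : jcont psi2z).

Let N x z := chi * (Cabs (psi1 x z) ^ 2 + Cabs (psi2 x z) ^ 2).

Hypothesis Heq1 : forall x z,
  Cmul Ci (psi1z x z) =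
  Cadd (Cadd (Cadd (Copp (psi1xx x z)) (Cscal (- kappa) (psi2 x z)))
             (Cmul Ci (Cscal gamma (psi1 x z))))
       (Cscal (N x z) (psi1 x z)).
Hypothesis Heq2 : forall x z,
  Cmul Ci (psi2z x z) =
  Cadd (Cadd (Cadd (Copp (psi2xx x z)) (Cscal (- kappa) (psi1 x z)))
             (Copp (Cmul Ci (Cscal gamma (psi2 x z)))))
       (Cscal (N x z) (psi2 x z)).
Hypotheses (Hv1 : forall z, vanishes_at_infty (fun x => psi1 x z))
  (Hv2 : forall z, vanishes_at_infty (fun x => psi2 x z))
  (Hv1x : forall z, vanishes_at_infty (fun x => psi1x x z))
  (Hv2x : forall z, vanishes_at_infty (fun x => psi2x x z)).
Hypothesis Hdom : forall z0, exists d g G, 0 < d /\ improper_integral g G /\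
  forall x z, Rabs (z - z0) < d ->
    Cabs (psi1 x z) * Cabs (psi1z x z) <= g x /\
    Cabs (psi1 x z) * Cabs (psi2z x z) <= g x /\
    Cabs (psi2 x z) * Cabs (psi1z x z) <= g x /\
    Cabs (psi2 x z) * Cabs (psi2z x z) <= g x.

Variables (S0 S1 S2 S3 : R -> R).
Hypothesis HS0 : forall z, improper_integral
  (fun x => Cabs (psi1 x z) ^ 2 + Cabs (psi2 x z) ^ 2) (S0 z).
Hypothesis HS1 : forall z, cintegral
  (fun x => Cadd (Cmul (Cconj (psi1 x z)) (psi2 x z))
                 (Cmul (Cconj (psi2 x z)) (psi1 x z))) (RtoC (S1 z)).
Hypothesis HS2 : forall z, exists L, cintegral
  (fun x => Csub (Cmul (Cconj (psi1 x z)) (psi2 x z))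
                 (Cmul (Cconj (psi2 x z)) (psi1 x z))) L /\
  RtoC (S2 z) = Cmul Ci L.
Hypothesis HS3 : forall z, improper_integral
  (fun x => Cabs (psi1 x z) ^ 2 - Cabs (psi2 x z) ^ 2) (S3 z).

Lemma Re_psi1z x z : Re (psi1z x z) =
  - Im (psi1xx x z) - kappa * Im (psi2 x z) + gamma * Re (psi1 x z) + N x z * Im (psi1 x z).
Proof. pose proof (f_equal Im (Heq1 x z)) as E; simpl in E; lra. Qed.

Lemma Im_psi1z x z : Im (psi1z x z) =
  Re (psi1xx x z) + kappa * Re (psi2 x z) + gamma * Im (psi1 x z) - N x z * Re (psi1 x z).
Proof. pose proof (f_equal Re (Heq1 x z)) as E; simpl in E; lra. Qed.

Lemma Re_psi2z x z : Re (psi2z x z) =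
  - Im (psi2xx x z) - kappa * Im (psi1 x z) - gamma * Re (psi2 x z) + N x z * Im (psi2 x z).
Proof. pose proof (f_equal Im (Heq2 x z)) as E; simpl in E; lra. Qed.

Lemma Im_psi2z x z : Im (psi2z x z) =
  Re (psi2xx x z) + kappa * Re (psi1 x z) - gamma * Im (psi2 x z) - N x z * Re (psi2 x z).
Proof. pose proof (f_equal Re (Heq2 x z)) as E; simpl in E; lra. Qed.

Lemma S0_integral z :
  is_RInt_improper (fun x => cdot (psi1 x z) (psi1 x z) + cdot (psi2 x z) (psi2 x z)) (S0 z).
Proof.
  apply (is_RInt_improper_ext (fun x => Cabs (psi1 x z) ^ 2 + Cabs (psi2 x z) ^ 2)).
  - intros x; rewrite !Cabs_sqr; reflexivity.
  - apply improper_integral_RInt, HS0.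
Qed.

Lemma S1_integral z :
  is_RInt_improper (fun x => 2 * cdot (psi1 x z) (psi2 x z)) (S1 z).
Proof.
  destruct (HS1 z) as [HRe _]; apply improper_integral_RInt in HRe.
  revert HRe; apply is_RInt_improper_ext; intros x; simpl; unfold cdot; ring.
Qed.

Lemma S2_integral z :
  is_RInt_improper (fun x => -2 * ccross (psi1 x z) (psi2 x z)) (S2 z).
Proof.
  destruct (HS2 z) as [L [[_ HIm] HL]]; apply improper_integral_RInt in HIm.
  apply (f_equal Re) in HL; simpl in HL.
  replace (S2 z) with (-1 * Im L) by lra.
  apply (is_RInt_improper_ext (fun x => -1 * Im (Csub (Cmul (Cconj (psi1 x z)) (psi2 x z))
                 (Cmul (Cconj (psi2 x z)) (psi1 x z))))).
  - intros x; simpl; unfold ccross; ring.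
  - apply is_RInt_improper_scal, HIm.
Qed.

Lemma S3_integral z :
  is_RInt_improper (fun x => cdot (psi1 x z) (psi1 x z) - cdot (psi2 x z) (psi2 x z)) (S3 z).
Proof.
  apply (is_RInt_improper_ext (fun x => Cabs (psi1 x z) ^ 2 - Cabs (psi2 x z) ^ 2)).
  - intros x; rewrite !Cabs_sqr; reflexivity.
  - apply improper_integral_RInt, HS3.
Qed.

Ltac dominate :=
  intros z0; destruct (Hdom z0) as (d & g & G & Hd & Hg & Hb);
  exists d, (fun x => 4 * g x), (4 * G);
  split; [exact Hd | split; [apply is_RInt_improper_scal, improper_integral_RInt, Hg |]];
  intros x z Hz; destruct (Hb x z Hz) as (B11 & B12 & B21 & B22);
  first [apply Rabs_double_minus_le | apply Rabs_double_plus_le];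
  (eapply Rle_trans; [apply Rabs_cdot_le || apply Rabs_ccross_le | assumption]).

Ltac balance_side_conditions :=
  match goal with
  | |- forall z x, is_derive _ _ _ =>
      intros ? ?; eapply is_derive_val; [unfold cdot, ccross; derive_poly | unfold cdot, ccross; ring]
  | |- forall z x, continuity_2d_pt _ _ _ => intros ? ?; unfold cdot, ccross; continuity_poly
  | |- forall z, Rvanishes_at_infty _ => intros ?; unfold cdot, ccross; vanishes_poly
  | |- forall z x, _ = _ =>
      intros ? ?; unfold cdot, ccross; rewrite Re_psi1z, Im_psi1z, Re_psi2z, Im_psi2z; ring
  | |- forall z0, exists d g G, _ => dominate
  end.

Lemma S0_derivative z : derivable_pt_lim S0 z (2 * gamma * S3 z).
Proof.
  revert z; apply (derivable_pt_lim_balance_law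
    (fun z x => cdot (psi1 x z) (psi1 x z) + cdot (psi2 x z) (psi2 x z))
    (fun z x => 2 * (cdot (psi1 x z) (psi1z x z) + cdot (psi2 x z) (psi2z x z)))
    (fun z x => 2 * gamma * (cdot (psi1 x z) (psi1 x z) - cdot (psi2 x z) (psi2 x z)))
    (fun z x => 2 * (ccross (psi1x x z) (psi1 x z) + ccross (psi2x x z) (psi2 x z)))
    (fun z x => 2 * (ccross (psi1xx x z) (psi1 x z) + ccross (psi2xx x z) (psi2 x z)))).
  all: try balance_side_conditions.
  - exact S0_integral.
  - intros z; apply is_RInt_improper_scal, S3_integral.
Qed.

Lemma S1_derivative z : derivable_pt_lim S1 z 0.
Proof.
  revert z; apply (derivable_pt_lim_balance_law
    (fun z x => 2 * cdot (psi1 x z) (psi2 x z))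
    (fun z x => 2 * (cdot (psi2 x z) (psi1z x z) + cdot (psi1 x z) (psi2z x z)))
    (fun _ _ => 0)
    (fun z x => 2 * (ccross (psi2x x z) (psi1 x z) + ccross (psi1x x z) (psi2 x z)))
    (fun z x => 2 * (ccross (psi2xx x z) (psi1 x z) + ccross (psi1xx x z) (psi2 x z)))).
  all: try balance_side_conditions.
  - exact S1_integral.
  - intros _; exact is_RInt_improper_0.
Qed.

Lemma S2_derivative z : derivable_pt_lim S2 z (- 2 * kappa * S3 z).
Proof.
  revert z; apply (derivable_pt_lim_balance_law
    (fun z x => -2 * ccross (psi1 x z) (psi2 x z))
    (fun z x => 2 * (ccross (psi2 x z) (psi1z x z) - ccross (psi1 x z) (psi2z x z)))
    (fun z x => - 2 * kappa * (cdot (psi1 x z) (psi1 x z) - cdot (psi2 x z) (psi2 x z)))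
    (fun z x => 2 * (cdot (psi1x x z) (psi2 x z) - cdot (psi1 x z) (psi2x x z)))
    (fun z x => 2 * (cdot (psi1xx x z) (psi2 x z) - cdot (psi1 x z) (psi2xx x z)))).
  all: try balance_side_conditions.
  - exact S2_integral.
  - intros z; apply is_RInt_improper_scal, S3_integral.
Qed.

Lemma S3_derivative z : derivable_pt_lim S3 z (2 * gamma * S0 z + 2 * kappa * S2 z).
Proof.
  revert z; apply (derivable_pt_lim_balance_law
    (fun z x => cdot (psi1 x z) (psi1 x z) - cdot (psi2 x z) (psi2 x z))
    (fun z x => 2 * (cdot (psi1 x z) (psi1z x z) - cdot (psi2 x z) (psi2z x z)))
    (fun z x => 2 * gamma * (cdot (psi1 x z) (psi1 x z) + cdot (psi2 x z) (psi2 x z))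
                + 2 * kappa * (-2 * ccross (psi1 x z) (psi2 x z)))
    (fun z x => 2 * (ccross (psi1x x z) (psi1 x z) - ccross (psi2x x z) (psi2 x z)))
    (fun z x => 2 * (ccross (psi1xx x z) (psi1 x z) - ccross (psi2xx x z) (psi2 x z)))).
  all: try balance_side_conditions.
  - exact S3_integral.
  - intros z; apply is_RInt_improper_plus; apply is_RInt_improper_scal;
      [apply S0_integral | apply S2_integral].
Qed.

Lemma Stokes_moment_equations :
  (forall z, derivable_pt_lim S0 z (2 * gamma * S3 z)) /\
  (forall z, derivable_pt_lim S1 z 0) /\
  (forall z, derivable_pt_lim S2 z (- 2 * kappa * S3 z)) /\
  (forall z, derivable_pt_lim S3 z (2 * gamma * S0 z + 2 * kappa * S2 z)).
Proof.
  repeat split;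
    [exact S0_derivative | exact S1_derivative | exact S2_derivative | exact S3_derivative].
Qed.

End Stokes_moments.

(** * The linear moment system *)

Lemma is_derive_Rconst_eq (f : R -> R) : (forall z, is_derive f z 0) -> forall z, f z = f 0.
Proof.
  intros Hf z.
  destruct (MVT_abs f (fun _ => 0) 0 z) as [c [Hc _]]; [intros c _; apply is_derive_Reals, Hf |].
  rewrite Rabs_R0, Rmult_0_l in Hc.
  apply Rabs_eq_0 in Hc; lra.
Qed.

Lemma is_derive_cos_lin (k z : R) : is_derive (fun t => cos (k * t)) z (- (k * sin (k * z))).
Proof. auto_derive; auto; ring. Qed.

Lemma is_derive_sin_lin (k z : R) : is_derive (fun t => sin (k * t)) z (k * cos (k * z)).
Proof. auto_derive; auto; ring. Qed.

(* The energy [k^2 u^2 + u'^2] of [u = y - c/k^2 - A1 cos (k z) - A2 sin (k z)] is constant and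
   vanishes at [0]. *)
Lemma harmonic_solution (y v : R -> R) (k c : R) :
  k <> 0 ->
  (forall z, is_derive y z (v z)) ->
  (forall z, is_derive v z (- k ^ 2 * y z + c)) ->
  forall z, y z = c / k ^ 2 + (y 0 - c / k ^ 2) * cos (k * z) + v 0 / k * sin (k * z).
Proof.
  intros Hk Hy Hv.
  set (A1 := y 0 - c / k ^ 2); set (A2 := v 0 / k).
  set (u z := y z - c / k ^ 2 - A1 * cos (k * z) - A2 * sin (k * z)).
  set (w z := v z + k * A1 * sin (k * z) - k * A2 * cos (k * z)).
  assert (Hu : forall z, is_derive u z (w z)).
  { intros z; eapply is_derive_val.
    - unfold u; apply is_derive_Rminus; [apply is_derive_Rminus; [apply is_derive_Rminus |] |].
      + apply Hy.
      + apply is_derive_Rconst.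
      + apply is_derive_Rscal, is_derive_cos_lin.
      + apply is_derive_Rscal, is_derive_sin_lin.
    - unfold w; simpl; ring. }
  assert (Hw : forall z, is_derive w z (- k ^ 2 * u z)).
  { intros z; eapply is_derive_val.
    - unfold w; apply is_derive_Rminus; [apply is_derive_Rplus |].
      + apply Hv.
      + apply is_derive_Rscal, is_derive_sin_lin.
      + apply is_derive_Rscal, is_derive_cos_lin.
    - unfold u, A1; field; exact Hk. }
  assert (Henergy : forall z, k ^ 2 * u z ^ 2 + w z ^ 2 = k ^ 2 * u 0 ^ 2 + w 0 ^ 2).
  { apply (is_derive_Rconst_eq (fun z => k ^ 2 * u z ^ 2 + w z ^ 2)); intros z.
    eapply is_derive_val.
    - apply is_derive_Rplus; [apply is_derive_Rscal |]; apply is_derive_Rsqr; auto.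
    - ring. }
  assert (Hu0 : u 0 = 0) by (unfold u, A1; rewrite Rmult_0_r, cos_0, sin_0; ring).
  assert (Hw0 : w 0 = 0) by (unfold w, A2; rewrite Rmult_0_r, cos_0, sin_0; field; exact Hk).
  intros z; specialize (Henergy z); rewrite Hu0, Hw0 in Henergy.
  assert (Hk2 : 0 < k ^ 2) by (apply pow2_gt_0; exact Hk).
  assert (Huz : u z = 0).
  { pose proof (pow2_ge_0 (u z)); pose proof (pow2_ge_0 (w z)).
    assert (Hsq : u z * u z = 0) by nra.
    apply Rmult_integral in Hsq; tauto. }
  unfold u in Huz; lra.
Qed.

Lemma Stokes_C_conserved (kappa gamma : R) (S0 S2 S3 : R -> R) :
  (forall z, derivable_pt_lim S0 z (2 * gamma * S3 z)) ->
  (forall z, derivable_pt_lim S2 z (- 2 * kappa * S3 z)) ->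
  forall z, kappa * S0 z + gamma * S2 z = kappa * S0 0 + gamma * S2 0.
Proof.
  intros D0 D2; apply (is_derive_Rconst_eq (fun z => kappa * S0 z + gamma * S2 z)); intros z.
  eapply is_derive_val.
  - apply is_derive_Rplus; apply is_derive_Rscal, is_derive_Reals; [apply D0 | apply D2].
  - ring.
Qed.

Lemma Stokes_S0_oscillation (kappa gamma : R) (S0 S2 S3 : R -> R) :
  0 <= gamma < kappa ->
  (forall z, derivable_pt_lim S0 z (2 * gamma * S3 z)) ->
  (forall z, derivable_pt_lim S2 z (- 2 * kappa * S3 z)) ->
  (forall z, derivable_pt_lim S3 z (2 * gamma * S0 z + 2 * kappa * S2 z)) ->
  let C := kappa * S0 0 + gamma * S2 0 in
  let omega := sqrt (kappa ^ 2 - gamma ^ 2) in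
  forall z, S0 z = kappa * C / omega ^ 2 + (S0 0 - kappa * C / omega ^ 2) * cos (2 * omega * z)
                   + gamma * S3 0 / omega * sin (2 * omega * z).
Proof.
  intros Hkg D0 D2 D3 C omega z.
  assert (Homega2 : omega ^ 2 = kappa ^ 2 - gamma ^ 2) by (apply pow2_sqrt; nra).
  assert (Homega : omega <> 0) by (intros E; rewrite E in Homega2; nra).
  assert (HC := Stokes_C_conserved kappa gamma S0 S2 S3 D0 D2).
  assert (Hosc := harmonic_solution S0 (fun z => 2 * gamma * S3 z) (2 * omega) (4 * kappa * C)).
  rewrite Hosc; [field; exact Homega | lra | intros t; apply is_derive_Reals, D0 |].
  intros t; eapply is_derive_val; [apply is_derive_Rscal, is_derive_Reals, D3 |].
  replace ((2 * omega) ^ 2) with (4 * (kappa ^ 2 - gamma ^ 2)) by (rewrite <- Homega2; ring).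
  replace C with (kappa * S0 t + gamma * S2 t) by apply HC.
  ring.
Qed.

Lemma Rabs_trig_combination_le (K A1 A2 k z : R) :
  Rabs (K + A1 * cos (k * z) + A2 * sin (k * z)) <= Rabs K + Rabs A1 + Rabs A2.
Proof.
  pose proof (Rabs_triang (K + A1 * cos (k * z)) (A2 * sin (k * z))).
  pose proof (Rabs_triang K (A1 * cos (k * z))).
  rewrite !Rabs_mult in *.
  assert (Hcos : Rabs (cos (k * z)) <= 1) by (apply Rabs_le, COS_bound).
  assert (Hsin : Rabs (sin (k * z)) <= 1) by (apply Rabs_le, SIN_bound).
  pose proof (Rabs_pos A1); pose proof (Rabs_pos A2); nra.
Qed.

Theorem mainTheorem7
  (kappa gamma chi : R) (Hkg : 0 <= gamma < kappa)
  (psi1 psi2 psi1x psi2x psi1xx psi2xx psi1z psi2z : R -> R -> cplx)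
  (Hd1x : pderiv_x psi1 psi1x) (Hd2x : pderiv_x psi2 psi2x)
  (Hd1xx : pderiv_x psi1x psi1xx) (Hd2xx : pderiv_x psi2x psi2xx)
  (Hd1z : pderiv_z psi1 psi1z) (Hd2z : pderiv_z psi2 psi2z)
  (Hc : jcont psi1 /\ jcont psi2 /\ jcont psi1x /\ jcont psi2x /\
        jcont psi1xx /\ jcont psi2xx /\ jcont psi1z /\ jcont psi2z)
  (Heq1 : forall x z,
     Cmul Ci (psi1z x z) =
     Cadd (Cadd (Cadd (Copp (psi1xx x z)) (Cscal (- kappa) (psi2 x z)))
                (Cmul Ci (Cscal gamma (psi1 x z))))
          (Cscal (chi * (Cabs (psi1 x z) ^ 2 + Cabs (psi2 x z) ^ 2)) (psi1 x z)))
  (Heq2 : forall x z,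
     Cmul Ci (psi2z x z) =
     Cadd (Cadd (Cadd (Copp (psi2xx x z)) (Cscal (- kappa) (psi1 x z)))
                (Copp (Cmul Ci (Cscal gamma (psi2 x z)))))
          (Cscal (chi * (Cabs (psi1 x z) ^ 2 + Cabs (psi2 x z) ^ 2)) (psi2 x z)))
  (Hdec : forall z,
     vanishes_at_infty (fun x => psi1 x z) /\ vanishes_at_infty (fun x => psi2 x z) /\
     vanishes_at_infty (fun x => psi1x x z) /\ vanishes_at_infty (fun x => psi2x x z))
  (Hdom : forall z0, exists d g G, 0 < d /\ improper_integral g G /\
     forall x z, Rabs (z - z0) < d ->
       Cabs (psi1 x z) * Cabs (psi1z x z) <= g x /\
       Cabs (psi1 x z) * Cabs (psi2z x z) <= g x /\
       Cabs (psi2 x z) * Cabs (psi1z x z) <= g x /\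
       Cabs (psi2 x z) * Cabs (psi2z x z) <= g x)
  (S0 S1 S2 S3 : R -> R)
  (HS0 : forall z, improper_integral
           (fun x => Cabs (psi1 x z) ^ 2 + Cabs (psi2 x z) ^ 2) (S0 z))
  (HS1 : forall z, cintegral
           (fun x => Cadd (Cmul (Cconj (psi1 x z)) (psi2 x z))
                          (Cmul (Cconj (psi2 x z)) (psi1 x z))) (RtoC (S1 z)))
  (HS2 : forall z, exists L, cintegral
           (fun x => Csub (Cmul (Cconj (psi1 x z)) (psi2 x z))
                          (Cmul (Cconj (psi2 x z)) (psi1 x z))) L /\
           RtoC (S2 z) = Cmul Ci L)
  (HS3 : forall z, improper_integral
           (fun x => Cabs (psi1 x z) ^ 2 - Cabs (psi2 x z) ^ 2) (S3 z)) :
  (forall z, derivable_pt_lim S0 z (2 * gamma * S3 z)) /\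
  (forall z, derivable_pt_lim S1 z 0) /\
  (forall z, derivable_pt_lim S2 z (- 2 * kappa * S3 z)) /\
  (forall z, derivable_pt_lim S3 z (2 * gamma * S0 z + 2 * kappa * S2 z)) /\
  (forall z, S1 z = S1 0) /\
  (forall z, kappa * S0 z + gamma * S2 z = kappa * S0 0 + gamma * S2 0) /\
  (let C := kappa * S0 0 + gamma * S2 0 in
   let omega := sqrt (kappa ^ 2 - gamma ^ 2) in
   exists A1 A2, forall z,
     S0 z = kappa * C / omega ^ 2 + A1 * cos (2 * omega * z) + A2 * sin (2 * omega * z)) /\
  (exists B, forall z, Rabs (S0 z) <= B).
Proof.
  destruct Hc as (Hc1 & Hc2 & _ & _ & Hc1xx & Hc2xx & Hc1z & Hc2z).
  destruct (Stokes_moment_equations kappa gamma chi psi1 psi2 psi1x psi2x psi1xx psi2xx psi1z psi2z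
    Hd1x Hd2x Hd1xx Hd2xx Hd1z Hd2z Hc1 Hc2 Hc1xx Hc2xx Hc1z Hc2z Heq1 Heq2
    (fun z => proj1 (Hdec z)) (fun z => proj1 (proj2 (Hdec z)))
    (fun z => proj1 (proj2 (proj2 (Hdec z)))) (fun z => proj2 (proj2 (proj2 (Hdec z))))
    Hdom S0 S1 S2 S3 HS0 HS1 HS2 HS3) as (D0 & D1 & D2 & D3).
  pose proof (Stokes_S0_oscillation kappa gamma S0 S2 S3 Hkg D0 D2 D3) as Hosc.
  split; [exact D0 | split; [exact D1 | split; [exact D2 | split; [exact D3 |]]]].
  split; [apply is_derive_Rconst_eq; intros z; apply is_derive_Reals, D1 |].
  split; [exact (Stokes_C_conserved kappa gamma S0 S2 S3 D0 D2) |].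
  split; [eexists; eexists; exact Hosc |].
  eexists; intros z; rewrite Hosc; apply Rabs_trig_combination_le.
Qed.
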